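(* The icosahedral graph (the 1-skeleton of the regular icosahedron, a 5-regular graph on 12 vertices) is diagonal.
   Context: $d$ denotes the shortest-path distance. For vertices $x_0,\dots,x_k$ put $\ell(x_0,\dots,x_k)=\sum_{i=0}^{k-1}d(x_i,x_{i+1})$. The magnitude chain complex: $\mathrm{MC}_{k,l}(G)$ is the free abelian group on $I_{k,l}(G)=\{(x_0,\dots,x_k)\in V(G)^{k+1}: x_i\neq x_{i+1}\ \forall i,\ \ell(x_0,\dots,x_k)=l\}$, with differential $\partial=\sum_{i=1}^{k-1}(-1)^i\partial_i:\mathrm{MC}_{k,l}\to\mathrm{MC}_{k-1,l}$, where $\partial_i(x_0,\dots,x_k)=(x_0,\dots,\hat x_i,\dots,x_k)$ if deleting $x_i$ does not change $\ell$, and $0$ otherwise. Magnitude homology: $\mathrm{MH}_{k,l}(G)=H_k(\mathrm{MC}_{*,l}(G))$. $G$ is diagonal if $\mathrm{MH}_{k,l}(G)=0$ whenever $k\ne l$. *)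

From HB Require Import structures.
From mathcomp Require Import all_boot all_order all_algebra.
Set Implicit Arguments. Unset Strict Implicit. Unset Printing Implicit Defensive.
Import Order.TTheory GRing.Theory Num.Theory.

Fixpoint ball (V : finType) (e : rel V) (k : nat) (x : V) : {set V} :=
  match k with
  | 0 => [set x]
  | k'.+1 => ball e k' x :|: [set y | [exists z, (z \in ball e k' x) && e z y]]
  end.

(* For a
   connected graph the distance is < #|V|, so searching k in 0..#|V|-1 is
   exact (if y is unreachable this returns #|V|; irrelevant for connected
   graphs such as the icosahedral graph). *)
Definition gdist (V : finType) (e : rel V) (x y : V) : nat :=
  find (fun k => y \in ball e k x) (iota 0 #|V|).

Fixpoint glen (V : finType) (e : rel V) (s : seq V) : nat :=
  match s with
  | x :: ((y :: _) as s') => gdist e x y + glen e s'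
  | _ => 0
  end.

Definition adj_distinct (V : finType) (s : seq V) : bool :=
  if s is x :: s' then path (fun a b => a != b) x s' else false.

Definition inI (V : finType) (e : rel V) (k l : nat) (s : seq V) : bool :=
  [&& size s == k.+1, adj_distinct s & glen e s == l].

Definition face (V : Type) (i : nat) (s : seq V) : seq V :=
  take i s ++ drop i.+1 s.

(* A chain is an integer-valued function on sequences; an element of
   MC_{k,l} is such a function supported on I_{k,l} (a finite set). *)
Definition chain (V : finType) := seq V -> int.

Definition supported (V : finType) (e : rel V) (k l : nat) (c : chain V) : Prop :=
  forall s, c s != 0%R -> inI e k l s.

(* coefficient of t in  d(s) = sum_{i=1}^{k-1} (-1)^i d_i(s), for s of length k+1 *)
Definition bd_coeff (V : finType) (e : rel V) (k : nat) (s t : seq V) : int :=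
  (\sum_(1 <= i < k)
     if (face i s == t) && (glen e (face i s) == glen e s)
     then (-1) ^+ i else 0)%R.

Definition bd (V : finType) (e : rel V) (k : nat) (c : chain V) : chain V :=
  fun t => (\sum_(s : (k.+1).-tuple V) c (tval s) * bd_coeff e k (tval s) t)%R.

Definition MH_vanishes (V : finType) (e : rel V) (k l : nat) : Prop :=
  forall c : chain V, supported e k l c -> (forall t, bd e k c t = 0%R) ->
    exists b : chain V, supported e k.+1 l b /\ (forall t, bd e k.+1 b t = c t).

Definition diagonal (V : finType) (e : rel V) : Prop :=
  forall k l : nat, k != l -> MH_vanishes e k l.

(* Vertices 0..11: 0 = top, 1..5 upper pentagon, 6..10 lower pentagon,
   11 = bottom; upper i is joined to lower 5+i and 5+(i mod 5)+1. *)
Definition ico_adj_nat (a b : nat) : bool :=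
  [|| (a == 0) && (1 <= b <= 5),
      (1 <= a <= 5) && (b == (a %% 5).+1),
      (6 <= a <= 10) && (b == ((a - 5) %% 5).+1 + 5),
      (1 <= a <= 5) && ((b == a + 5) || (b == (a %% 5).+1 + 5))
    | (a == 11) && (6 <= b <= 10)].

Definition ico_edge : rel 'I_12 :=
  fun x y => ico_adj_nat x y || ico_adj_nat y x.

(* Below the diagonal (l < k) the groups vanish for a trivial reason: a tuple
   with consecutive distinct entries is at least as long as its number of
   steps, so MC_{k,l} = 0.  Above the diagonal we use algebraic Morse theory.

   Every
      off-diagonal cycle is reduced to zero by subtracting boundaries of the
      partners of its lower generators, in increasing order of potential.
   3. [GeodesicMatching]: such a matching is built from a choice of first
      steps of geodesics and a ranking of neighbours satisfying a coherence
      and a monotonicity condition.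
   4. [Icosahedron]: the distance matrix, first steps and ranks of the
      icosahedral graph are given as tables and the required conditions are
      verified by computation. *)

From mathcomp Require Import all_boot all_order all_algebra.
From mathcomp Require Import zify.
Set Implicit Arguments. Unset Strict Implicit. Unset Printing Implicit Defensive.
Import GRing.Theory.

Section MagnitudeChains.

Variables (V : finType) (e : rel V).
Local Notation d := (gdist e).
Local Notation gl := (glen e).

Lemma gdist_eq0 (x y : V) : (d x y == 0) = (x == y).
Proof.
rewrite /gdist; have : 0 < #|V| by apply/card_gt0P; exists x.
case: #|V| => [|n] // _.
by rewrite /= in_set1 [y == x]eq_sym; case: (x == y).
Qed.

Lemma gdist_gt0 (x y : V) : x != y -> 0 < d x y.
Proof. by rewrite lt0n gdist_eq0. Qed.

Lemma glen_cons2 (x y : V) r : gl (x :: y :: r) = d x y + gl (y :: r).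
Proof. by []. Qed.

Lemma adj_cons2 (x y : V) r :
  adj_distinct (x :: y :: r) = (x != y) && adj_distinct (y :: r).
Proof. by []. Qed.

(* A tuple with consecutive distinct entries has length at least its number
   of steps; this makes MC_{k,l} trivial when l < k. *)
Lemma glen_ge (s : seq V) : adj_distinct s -> (size s).-1 <= gl s.
Proof.
elim: s => [|x [|y t] IH] //; rewrite adj_cons2 => /andP [Hxy Had].
by rewrite glen_cons2 /= -add1n leq_add ?gdist_gt0 // (IH Had).
Qed.

Lemma face_cons i (x : V) t : face i.+1 (x :: t) = x :: face i t.
Proof. by []. Qed.

Lemma size_face i (s : seq V) : i < size s -> size (face i s) = (size s).-1.
Proof.
move=> Hi; rewrite /face size_cat size_take size_drop Hi.
by case: (size s) Hi => // n Hn /=; lia.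
Qed.

Lemma nth_face (x0 : V) i (s : seq V) n : i < size s ->
  nth x0 (face i s) n = nth x0 s (if n < i then n else n.+1).
Proof.
move=> Hi; rewrite /face nth_cat size_take Hi.
case: ltnP => Hn; first by rewrite nth_take.
by rewrite nth_drop; congr nth; lia.
Qed.

Lemma face_inj (s : seq V) i j : adj_distinct s -> i < j -> j < size s ->
  face i s != face j s.
Proof.
case: s => [|x0 s'] // Had Hij Hj; apply/eqP => /(congr1 (nth x0 ^~ i)).
rewrite !nth_face ?ltnn ?Hij //; last exact: ltn_trans Hj.
move: Had => /(pathP x0) Had; apply/eqP; rewrite eq_sym.
by apply: Had; rewrite (leq_trans Hij) // -ltnS.
Qed.

Lemma face_comm (s : seq V) i j : i <= j -> j.+1 < size s ->
  face i (face j.+1 s) = face j (face i s).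
Proof.
move=> Hij Hj.
have [x0 _] : {x0 : V | true} by case: s Hj => [|x0 ?] //; exists x0.
have Hsz1 : size (face j.+1 s) = (size s).-1 by rewrite size_face // ltnW.
have Hsz2 : size (face i s) = (size s).-1 by rewrite size_face //; lia.
apply: (eq_from_nth (x0 := x0)).
  by rewrite size_face ?Hsz1 ?size_face ?Hsz2 //; lia.
move=> n Hn.
rewrite nth_face ?Hsz1; last by lia.
rewrite nth_face; last by lia.
rewrite nth_face ?Hsz2; last by lia.
rewrite nth_face; last by lia.
by congr nth; case: (ltnP n i) => H1; case: (ltnP n j) => H2 /=;
  do ?case: ifP => ?; lia.
Qed.

(* [on_geodesic i s]: the interior vertex x_i of s lies on a geodesic between
   its two neighbours, i.e. the face map \partial_i does not vanish on s. *)
Definition on_geodesic (i : nat) (s : seq V) : bool :=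
  (0 < i < (size s).-1) && (gl (face i s) == gl s).

Lemma on_geodesic_range i (s : seq V) : on_geodesic i s -> 0 < i < (size s).-1.
Proof. by case/andP. Qed.

Lemma on_geodesic1 (x y z : V) r :
  on_geodesic 1 (x :: y :: z :: r) = (d x z == d x y + d y z).
Proof. by rewrite /on_geodesic /= addnA eqn_add2r. Qed.

Lemma on_geodesic_cons i (x y : V) t : 0 < i ->
  on_geodesic i.+1 (x :: y :: t) = on_geodesic i (y :: t).
Proof. by case: i => // i _; rewrite /on_geodesic /= eqn_add2l. Qed.

Lemma face_adj i (s : seq V) : adj_distinct s -> on_geodesic i s ->
  adj_distinct (face i s).
Proof.
elim: s i => [|x [|y t] IH] i //; first by rewrite /on_geodesic ltn0 andbF.
rewrite adj_cons2 => /andP [Hxy Had].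
case: i => [|[|i]] //.
  case: t Had {IH} => [|z t'] //; rewrite adj_cons2 on_geodesic1.
  move=> /andP [Hyz Had] /eqP Hd.
  rewrite [face 1 _]/= adj_cons2 Had andbT -gdist_eq0 Hd addn_eq0.
  by rewrite gdist_eq0 (negbTE Hxy).
rewrite on_geodesic_cons // face_cons adj_cons2 Hxy => /(IH _ Had).
by rewrite face_cons.
Qed.

Lemma inI_face k l (s : seq V) i : inI e k.+1 l s -> on_geodesic i s ->
  inI e k l (face i s).
Proof.
move=> /and3P [/eqP Hs Had /eqP Hl] Hg.
have /andP [_ Hi] := on_geodesic_range Hg.
apply/and3P; split; last by move: Hg; rewrite /on_geodesic Hl => /andP [_].
- by rewrite size_face Hs //; rewrite Hs in Hi; apply: ltn_trans Hi _.
- exact: face_adj.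
Qed.

(* From here on the distance satisfies the triangle inequality (as it does
   on any connected graph). *)
Hypothesis gdist_tri : forall x y z : V, d x z <= d x y + d y z.

Lemma glen_face_le (s : seq V) i : 0 < i < (size s).-1 -> gl (face i s) <= gl s.
Proof.
elim: s i => [|x [|y t] IH] i //; first by rewrite ltn0 andbF.
case: i => [|[|i]] //.
  by case: t {IH} => [|z t'] // _; rewrite /= addnA leq_add2r.
move=> Hi; rewrite face_cons !glen_cons2 leq_add2l.
by apply: (IH i.+1); move: Hi => /=; lia.
Qed.

Local Open Scope ring_scope.

Lemma sign_sq (i : nat) : (-1) ^+ i * (-1) ^+ i = 1 :> int.
Proof. by rewrite -exprMn mulrNN mulr1 expr1n. Qed.

Lemma bd_coeff_face k (s : seq V) i : adj_distinct s -> size s = k.+1 ->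
  on_geodesic i s -> bd_coeff e k s (face i s) = (-1) ^+ i.
Proof.
move=> Had Hs Hg; have /andP [H0 Hi] := on_geodesic_range Hg.
rewrite Hs /= in Hi.
rewrite /bd_coeff (bigD1_seq i) /= ?mem_index_iota ?H0 ?Hi ?iota_uniq //.
rewrite eqxx (eqP (proj2 (andP Hg))) eqxx /= big1_seq ?addr0 //.
move=> j /andP [Hji]; rewrite mem_index_iota => /andP [_ Hj].
have Hj' : (j < size s)%N by rewrite Hs ltnW.
have Hi' : (i < size s)%N by rewrite Hs ltnW.
case: (ltngtP j i) Hji => // Hc _.
- by rewrite (negbTE (face_inj Had Hc Hi')).
- by rewrite eq_sym (negbTE (face_inj Had Hc Hj')).
Qed.

Lemma bd_coeff_neq0 k (s t : seq V) : size s = k.+1 -> bd_coeff e k s t != 0 ->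
  exists2 i, on_geodesic i s & face i s = t.
Proof.
move=> Hs Hnz.
have /hasP [i] : has (fun i => (face i s == t) && (gl (face i s) == gl s))
                     (index_iota 1 k).
  apply: contraNT Hnz => /hasPn Hno; rewrite /bd_coeff big1_seq // => i.
  by case/andP=> _ /Hno /negbTE ->.
rewrite mem_index_iota => Hi /andP [/eqP Hf Hg]; exists i => //.
by rewrite /on_geodesic Hg Hs Hi.
Qed.

Lemma bdB k (c1 c2 : chain V) t :
  bd e k (fun s => c1 s - c2 s) t = bd e k c1 t - bd e k c2 t.
Proof. by rewrite /bd -sumrB; apply: eq_bigr => s _; rewrite mulrBl. Qed.

Lemma bdD k (c1 c2 : chain V) t :
  bd e k (fun s => c1 s + c2 s) t = bd e k c1 t + bd e k c2 t.
Proof. by rewrite /bd -big_split; apply: eq_bigr => s _; rewrite mulrDl. Qed.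

Lemma bd0 k t : bd e k (fun _ => 0) t = 0.
Proof. by rewrite /bd big1 // => s _; rewrite mul0r. Qed.

Lemma sum_antisym n (G : nat -> nat -> int) :
  (forall i j, (i <= j < n)%N -> G i j = - G j.+1 i) ->
  \sum_(i < n.+1) \sum_(j < n) G i j = 0.
Proof.
move=> HG.
have Hsplit (i : 'I_n.+1) : \sum_(j < n) G i j =
   \sum_(j < n) (if (j < i)%N then G i j else 0) +
   \sum_(j < n) (if (i <= j)%N then G i j else 0).
  rewrite -big_split /=; apply: eq_bigr => j _.
  by case: ltnP => _; rewrite ?addr0 ?add0r.
rewrite (eq_bigr _ (fun i _ => Hsplit i)) big_split /=.
rewrite big_ord_recl /= big1_eq add0r.
rewrite [X in _ + X]big_ord_recr /= [X in _ + (_ + X)]big1 ?addr0; last first.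
  by move=> j _; rewrite leqNgt ltn_ord.
rewrite exchange_big /= -[X in X + _]opprK; apply/eqP.
rewrite addrC subr_eq0 -sumrN; apply/eqP.
apply: eq_bigr => i _; rewrite -sumrN; apply: eq_bigr => j _.
rewrite /bump leq0n add1n ltnS.
by case: ifP => H; rewrite ?oppr0 // HG // H ltn_ord.
Qed.

Lemma sum_from1 (n : nat) (f : nat -> int) :
  \sum_(1 <= i < n) f i = \sum_(i < n) (if (0 < i)%N then f i else 0).
Proof.
case: n => [|n]; first by rewrite big_ord0 big_geq.
by rewrite big_ord_recl /= add0r big_add1 /= big_mkord.
Qed.

Lemma sum_tuple_at n (v : seq V) (F : seq V -> int) : size v = n ->
  \sum_(u : n.-tuple V) (if tval u == v then F (tval u) else 0) = F v.
Proof.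
move=> Hv; have Hv' : size v == n by rewrite Hv.
rewrite (bigD1 (Tuple Hv')) //= eqxx big1 ?addr0 // => u Hu.
by rewrite ifN //; apply: contra Hu => /eqP H; apply/eqP/val_inj.
Qed.

(* The contribution to ∂∂s of deleting x_i and then the j-th entry of the
   result. *)
Definition double_face_coeff (s t : seq V) (i j : nat) : int :=
  if (face j (face i s) == t) && (gl (face j (face i s)) == gl s)
  then (-1) ^+ (i + j) else 0.

(* Expanding ∂∂s along the first deletion x_i: by the triangle inequality,
   the length condition of a composite face is that of the double deletion. *)
Lemma bd_coeff_comp_row k (s t : seq V) i : size s = k.+2 -> (0 < i < k.+1)%N ->
  \sum_(u : (k.+1).-tuple V)
     (if (face i s == u) && (gl (face i s) == gl s) then (-1) ^+ i else 0)
       * bd_coeff e k u t = \sum_(1 <= j < k) double_face_coeff s t i j.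
Proof.
move=> Hs Hi; have Hfi : size (face i s) = k.+1 by rewrite size_face Hs //; lia.
transitivity
  (if gl (face i s) == gl s then (-1) ^+ i * bd_coeff e k (face i s) t else 0).
  rewrite -(sum_tuple_at (fun w =>
    if gl (face i s) == gl s then (-1) ^+ i * bd_coeff e k w t else 0) Hfi).
  apply: eq_bigr => u _; rewrite [face i s == _]eq_sym.
  case: (tval u =P face i s) => [->|_] /=; last by rewrite mul0r.
  by case: (gl (face i s) == gl s); rewrite ?mul0r.
have Hle : (gl (face i s) <= gl s)%N by apply: glen_face_le; rewrite Hs; lia.
rewrite /double_face_coeff; case: eqP => Hgl /=.
  rewrite /bd_coeff mulr_sumr; apply: eq_big_nat => j Hj.
  rewrite Hgl; case: (face j (face i s) == t) => /=; last by rewrite mulr0.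
  by case: ifP; rewrite ?mulr0 // exprD.
apply/esym/big1_seq => j /andP [_]; rewrite mem_index_iota => Hj.
have Hle1 : (gl (face j (face i s)) <= gl (face i s))%N.
  by apply: glen_face_le; rewrite Hfi; lia.
case: (face j (face i s) == t) => //=.
by case: eqP => // Hgl'; exfalso; apply: Hgl; lia.
Qed.

(* The composite of two consecutive boundary maps vanishes on each
   generator: by the simplicial identity the double deletions of (i, j) and
   (j+1, i), i <= j, coincide and carry opposite signs. *)
Lemma bd_coeff_comp k (s t : seq V) : size s = k.+2 ->
  \sum_(u : (k.+1).-tuple V) bd_coeff e k.+1 s u * bd_coeff e k u t = 0.
Proof.
move=> Hs; rewrite {1}/bd_coeff.
under eq_bigr => u _ do rewrite big_distrl /=.
rewrite exchange_big /= (eq_big_nat _ _ (fun i => @bd_coeff_comp_row k s t i Hs)) sum_from1.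
pose G i j := if (0 < i)%N && (0 < j)%N then double_face_coeff s t i j else 0.
rewrite (eq_bigr (fun i : 'I_k.+1 => \sum_(j < k) G i j)); last first.
  by move=> i _; rewrite sum_from1 /G; case: (0 < i)%N; rewrite //= big1.
apply: sum_antisym => i j /andP [Hij Hj].
rewrite /G; case: (posnP i) => [->|Hi] /=; first by rewrite oppr0.
rewrite (leq_trans Hi Hij) /double_face_coeff face_comm ?Hs //; last by lia.
rewrite addSn addnC exprS.
by case: ifP; rewrite ?mulN1r ?opprK ?oppr0.
Qed.

Lemma bd_bd k (b : chain V) t : bd e k (bd e k.+1 b) t = 0.
Proof.
rewrite /bd; under eq_bigr => u _ do rewrite mulr_suml.
rewrite exchange_big /=; apply: big1 => s _.
under eq_bigr => u _ do rewrite -mulrA.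
by rewrite -mulr_sumr bd_coeff_comp ?mulr0 // size_tuple.
Qed.

End MagnitudeChains.

Section AcyclicMatching.

Variables (V : finType) (e : rel V).
Local Notation gl := (glen e).

(* The triangle inequality makes MC_{*,l} a chain complex. *)
Hypothesis gdist_tri : forall x y z : V, gdist e x z <= gdist e x y + gdist e y z.

(* A partial matching on tuples: [M s = Some (true, t)] pairs s with a
   tuple t having one more entry (s is then called lower),
   [M s = Some (false, t)] pairs it with a shorter one, and [M s = None]
   marks s as critical.  The matching must be an involution, respect the
   boundary (a lower s is a geodesic face of its partner), and be acyclic,
   as witnessed by a potential P bounded on tuples of each size. *)
Variable M : seq V -> option (bool * seq V).
Variables (P : seq V -> nat) (Pmax : nat -> nat).

Hypothesis M_inv : forall s b t, adj_distinct s -> M s = Some (b, t) ->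
  M t = Some (~~ b, s).
Hypothesis M_adj : forall s b t, adj_distinct s -> M s = Some (b, t) ->
  adj_distinct t.
Hypothesis M_face : forall s t, adj_distinct s -> M s = Some (true, t) ->
  exists2 i, on_geodesic e i t & face i t = s.
Hypothesis P_bound : forall s, P s < Pmax (size s).
Hypothesis M_grad : forall s t i u, adj_distinct s -> M s = Some (true, t) ->
  on_geodesic e i t -> face i t != s -> M (face i t) = Some (true, u) ->
  P s < P (face i t).
Hypothesis M_crit : forall s, adj_distinct s -> M s = None -> gl s = (size s).-1.

Definition is_lower (s : seq V) : bool :=
  if M s is Some (true, _) then true else false.

Lemma partner_inI k l s t : inI e k l s -> M s = Some (true, t) ->
  inI e k.+1 l t.
Proof.
move=> /and3P [/eqP Hs Had /eqP Hl] Ht.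
have [i Hg Hf] := M_face Had Ht; have /andP [_ Hi] := on_geodesic_range Hg.
have Hsz : size s = (size t).-1 by rewrite -Hf size_face //; lia.
apply/and3P; split; first by apply/eqP; lia.
- exact: M_adj Had Ht.
- by move: Hg; rewrite /on_geodesic Hf Hl eq_sym => /andP [_].
Qed.

Lemma upper_partner k l s : k < l -> inI e k l s -> ~~ is_lower s ->
  exists t, M s = Some (false, t).
Proof.
move=> Hkl /and3P [/eqP Hs Had /eqP Hl]; rewrite /is_lower.
case Es: (M s) => [[[] t]|] // _; first by exists t.
by have := M_crit Had Es; rewrite Hl Hs /=; lia.
Qed.

Lemma potential_drop z w' w y j : adj_distinct z -> M z = Some (false, w') ->
  on_geodesic e j z -> face j z = w -> z != y -> M w = Some (true, y) ->
  P w' < P w.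
Proof.
move=> Hadz Ez Hg Hf Hzy Ew.
have Ew' : M w' = Some (true, z) := M_inv Hadz Ez.
have Hne : face j z != w'.
  by rewrite Hf; apply: contra_neq Hzy => Hww; move: Ew; rewrite Hww Ew' => -[].
by have := M_grad (M_adj Hadz Ez) Ew' Hg Hne; rewrite Hf => /(_ _ Ew).
Qed.

Local Open Scope ring_scope.

Definition is_cycle k (c : chain V) : Prop := forall t, bd e k c t = 0.

Definition lower_above (c : chain V) (th : nat) : Prop :=
  forall x, c x != 0 -> is_lower x -> (th <= P x)%N.

Lemma tuple_of_size n (s : seq V) : size s = n -> exists u : n.-tuple V, tval u = s.
Proof.
move=> Hs; have Hs' : size s == n by rewrite Hs.
by exists (Tuple Hs').
Qed.

(* An off-diagonal cycle supported on upper generators only is zero: at an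
   upper generator y of the support whose partner w has least potential, the
   boundary of c at w receives the contribution of y alone. *)
Lemma upper_cycle_vanishes k l (c : chain V) : (k < l)%N -> supported e k l c ->
  is_cycle k c -> (forall x, c x != 0 -> ~~ is_lower x) -> forall s, c s = 0.
Proof.
move=> Hkl Hsup Hcyc Hlow s0; apply/eqP; apply: contraT => Hs0.
have Hup z : c z != 0 -> exists w, M z = Some (false, w).
  by move=> Hz; apply: upper_partner Hkl (Hsup z Hz) (Hlow z Hz).
pose Q m := [exists y : (k.+1).-tuple V, (c y != 0) &&
              (if M y is Some (false, w) then P w == m else false)].
have Qex : exists m, Q m.
  have [w Hw] := Hup s0 Hs0; have /and3P [/eqP Hs _ _] := Hsup s0 Hs0.
  have [u Hu] := tuple_of_size Hs.
  by exists (P w); apply/existsP; exists u; rewrite Hu Hs0 Hw eqxx.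
case: (ex_minnP Qex) => m /existsP [y /andP [Hy Hm]] Hmin.
case Ey: (M y) Hm => [[[] w]|] //= /eqP Hwm.
have /and3P [/eqP Hsy Hady _] := Hsup y Hy.
have Hw := M_inv Hady Ey.
have [i Hg Hfi] := M_face (M_adj Hady Ey) Hw.
have := Hcyc w; rewrite /bd (bigD1 y) //= big1 ?addr0; last first.
  move=> z Hzy; case: (eqVneq (c z) 0) => [->|Hz]; first by rewrite mul0r.
  case: (eqVneq (bd_coeff e k z w) 0) => [->|Hc]; first by rewrite mulr0.
  have /and3P [/eqP Hsz Hadz _] := Hsup z Hz.
  have [j Hgj Hfj] := bd_coeff_neq0 Hsz Hc.
  have [w' Ew'] := Hup z Hz.
  have Hzy' : tval z != tval y by [].
  have := potential_drop Hadz Ew' Hgj Hfj Hzy' Hw.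
  have /Hmin : Q (P w') by apply/existsP; exists z; rewrite Hz Ew' eqxx.
  by rewrite -Hwm; lia.
rewrite -Hfi (bd_coeff_face Hady Hsy Hg).
by move/eqP; rewrite mulf_eq0 signr_eq0 orbF (negbTE Hy).
Qed.

(* One step of the Morse reduction: cancel the lower generators x of
   potential th in the support of c against the boundaries of their
   partners. *)
Definition reduce_chain k l (c : chain V) (th : nat) : chain V := fun y =>
  if inI e k.+1 l y then
    if M y is Some (false, x) then
      if P x == th then c x * bd_coeff e k.+1 y x else 0
    else 0
  else 0.

Lemma reduce_supported k l c th : supported e k.+1 l (reduce_chain k l c th).
Proof. by move=> y; rewrite /reduce_chain; case: ifP. Qed.

Lemma bd_reduce_neq0 k l c th t : bd e k.+1 (reduce_chain k l c th) t != 0 ->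
  exists y x, [/\ inI e k.+1 l y, M y = Some (false, x), P x = th, c x != 0
                & exists2 i, on_geodesic e i y & face i y = t].
Proof.
move=> Hnz.
have [y Hy] : exists y : (k.+2).-tuple V,
    reduce_chain k l c th y * bd_coeff e k.+1 y t != 0.
  apply/existsP; apply: contraNT Hnz => /existsPn Hall.
  by rewrite /bd big1 // => y _; apply/eqP/negbNE.
exists (tval y); move: Hy; rewrite /reduce_chain.
case Hiy: (inI e k.+1 l y); last by rewrite mul0r eqxx.
case Ey: (M y) => [[[] x]|]; rewrite ?mul0r ?eqxx //.
case: (P x =P th) => Hx; last by rewrite mul0r eqxx.
rewrite !mulf_eq0 !negb_or => /andP [/andP [Hcx _] Hct].
have /and3P [/eqP Hsy _ _] := Hiy.
by exists x; split => //; apply: bd_coeff_neq0 Hsy Hct.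
Qed.

Lemma bd_reduce_lower k l c th x y : supported e k l c -> lower_above c th ->
  c x != 0 -> M x = Some (true, y) -> P x = th ->
  bd e k.+1 (reduce_chain k l c th) x = c x.
Proof.
move=> Hsup Habove Hcx Ex Hth.
have Hix := Hsup x Hcx; have /and3P [_ Hadx _] := Hix.
have Hiy := partner_inI Hix Ex; have /and3P [/eqP Hsy Hady _] := Hiy.
have Ey := M_inv Hadx Ex; have [i Hg Hf] := M_face Hadx Ex.
have [u Hu] := tuple_of_size Hsy.
rewrite /bd (bigD1 u) //= big1 ?addr0.
  rewrite Hu /reduce_chain Hiy Ey Hth eqxx -Hf (bd_coeff_face Hady Hsy Hg).
  by rewrite -mulrA sign_sq mulr1.
move=> u' Hu'; apply/eqP; apply: contraT => Hnz.
rewrite /reduce_chain in Hnz.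
move: Hnz; case Hiu': (inI e k.+1 l u'); last by rewrite mul0r eqxx.
case Eu': (M u') => [[[] x']|]; rewrite ?mul0r ?eqxx //.
case: (P x' =P th) => Hx'; last by rewrite mul0r eqxx.
rewrite !mulf_eq0 !negb_or => /andP [_ Hct].
have /and3P [/eqP Hsu' Hadu' _] := Hiu'.
have [j Hgj Hfj] := bd_coeff_neq0 Hsu' Hct.
have Hne : tval u' != y by rewrite -Hu; apply: contra Hu' => /eqP/val_inj ->.
by have := potential_drop Hadu' Eu' Hgj Hfj Hne Ex; rewrite Hx' -Hth ltnn.
Qed.

Lemma reduction_step k l c th :
  supported e k l c -> is_cycle k c -> lower_above c th ->
  let c' := fun s => c s - bd e k.+1 (reduce_chain k l c th) s in
  [/\ supported e k l c', is_cycle k c' & lower_above c' th.+1].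
Proof.
move=> Hsup Hcyc Habove c'; split.
- move=> t; rewrite /c'; case: (eqVneq (c t) 0) => [->|Hct _]; last exact: Hsup.
  rewrite sub0r oppr_eq0 => /bd_reduce_neq0 [y [x [Hiy _ _ _ [i Hg <-]]]].
  exact: inI_face Hiy Hg.
- by move=> t; rewrite /c' bdB Hcyc bd_bd // subr0.
- move=> x Hx; rewrite /is_lower; case Ex: (M x) => [[[] y]|] // _.
  case: (eqVneq (c x) 0) => [Hcx|Hcx].
    move: Hx; rewrite /c' Hcx sub0r oppr_eq0.
    move=> /bd_reduce_neq0 [y' [x' [Hiy' Ey' <- Hcx' [i Hg Hf]]]].
    have /and3P [_ Hady' _] := Hiy'.
    apply: (potential_drop Hady' Ey' Hg Hf _ Ex).
    apply: contraNneq Hcx' => Hyy.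
    have Ey : M y = Some (false, x).
      by apply: M_inv Ex; rewrite -Hf; apply: face_adj Hady' Hg.
    by move: Ey'; rewrite Hyy Ey => -[<-]; rewrite Hcx.
  have := Habove x Hcx; rewrite /is_lower Ex => /(_ isT).
  rewrite leq_eqVlt => /orP [/eqP Hth|//].
  by move: Hx; rewrite /c' (bd_reduce_lower Hsup Habove Hcx Ex (esym Hth)) subrr eqxx.
Qed.

(* Iterating the reduction, every off-diagonal cycle is a boundary: the
   potential threshold rises at each step and is bounded on MC_{k,l}. *)
Lemma offdiag_cycle_is_boundary k l : (k < l)%N -> forall n th c,
  supported e k l c -> is_cycle k c -> lower_above c th ->
  (Pmax k.+1 <= th + n)%N ->
  exists b, supported e k.+1 l b /\ forall t, bd e k.+1 b t = c t.
Proof.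
move=> Hkl; elim=> [|n IH] th c Hsup Hcyc Habove Hn.
  exists (fun _ => 0); split => [s|t]; first by rewrite eqxx.
  rewrite bd0 (upper_cycle_vanishes Hkl Hsup Hcyc) // => x Hx.
  apply/negP => Hl; have := Habove x Hx Hl.
  have /and3P [/eqP Hs _ _] := Hsup x Hx.
  by have := P_bound x; rewrite Hs; lia.
have [Hsup' Hcyc' Habove'] := reduction_step Hsup Hcyc Habove.
have [b [Hbsup Hbbd]] := IH _ _ Hsup' Hcyc' Habove' ltac:(by rewrite addSnnS).
exists (fun s => b s + reduce_chain k l c th s); split.
  move=> s; case: (eqVneq (b s) 0) => [->|Hbs _]; last exact: Hbsup.
  by rewrite add0r; apply: reduce_supported.
by move=> t; rewrite bdD Hbbd subrK.
Qed.

(* Algebraic Morse theory: a graph carrying such a matching is diagonal.  Below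
   the diagonal MC_{k,l} is zero because a tuple is at least as long as its
   number of steps. *)
Theorem acyclic_matching_diagonal : diagonal e.
Proof.
move=> k l Hkl c Hsup Hcyc; case: (ltngtP k l) Hkl => // Hlt _.
  exact: (offdiag_cycle_is_boundary Hlt (n := Pmax k.+1) (th := 0)).
exists (fun _ => 0); split => [s|t]; first by rewrite eqxx.
rewrite bd0; apply/esym/eqP; apply: contraT => Ht.
have /and3P [/eqP Hs Had /eqP Hl] := Hsup t Ht.
by have := glen_ge e Had; rewrite Hs Hl /=; lia.
Qed.

End AcyclicMatching.

Section GeodesicMatching.

Variables (V : finType) (e : rel V).
Local Notation d := (gdist e).
Local Notation gl := (glen e).

(* [next p x y] is a chosen first step of a geodesic from x to y, allowed to
   depend on the vertex p preceding x; [rank p x] orders the neighbours of x. *)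
Variables (next : V -> V -> V -> V) (rank : V -> V -> V -> nat) (B : nat).

Hypothesis next_adj : forall p x y, x != y -> d x y != 1 ->
  d x (next p x y) = 1.
Hypothesis next_geod : forall p x y, x != y -> d x y != 1 ->
  d x y = d x (next p x y) + d (next p x y) y.
(* Coherence: for a step x -> y of length 1 followed by a long step y -> z,
   y is the chosen first step from x to z exactly when it is the chosen first
   step from x to the chosen first step from y to z. *)
Hypothesis next_coh : forall p x y z, d x y = 1 -> 2 <= d y z ->
  ((d x z == d x y + d y z) && (next p x z == y)) =
  ((d x (next x y z) == d x y + d y (next x y z)) && (next p x (next x y z) == y)).
Hypothesis rank_next : forall p x y t, d x y = 1 -> d y t = 1 -> d x t = 2 ->
  next p x t != y -> rank p x y < rank p x (next p x t).
Hypothesis rank_lt : forall p x y, rank p x y < B.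

Lemma gdist_neq (x y : V) : 0 < d x y -> x != y.
Proof. by rewrite lt0n gdist_eq0. Qed.

Lemma gdist_not1 (x y : V) : (d x y != 1) = false -> d x y = 1.
Proof. by move/negbFE/eqP. Qed.

(* [cancels p x y r]: in x :: y :: r the unit step to y is the chosen first
   step of a geodesic from x to the next vertex, so y may be deleted. *)
Definition cancels (p x y : V) (r : seq V) : bool :=
  if r is z :: _ then (d x z == d x y + d y z) && (next p x z == y) else false.

Definition cons_match (x : V) (o : option (bool * seq V)) :=
  if o is Some (b, t) then Some (b, x :: t) else None.

(* The matching scans a tuple from the left, p being the previous vertex:
   at the first step x -> y that is not of unit length it inserts the chosen
   first step (matching upwards); at a unit step x -> y that can be cancelled
   it deletes y (matching downwards); otherwise it moves on. *)
Fixpoint gmatch (p : V) (s : seq V) : option (bool * seq V) :=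
  match s with
  | x :: ((y :: r) as s1) =>
      if d x y != 1 then Some (true, x :: next p x y :: s1)
      else if cancels p x y r then Some (false, x :: r)
      else cons_match x (gmatch x s1)
  | _ => None
  end.

(* The potential weighs the rank met at each step by a power of B.+1 that
   decreases along the tuple. *)
Fixpoint gpot (p : V) (s : seq V) : nat :=
  match s with
  | x :: ((y :: r) as s1) =>
      if d x y != 1 then (rank p x (next p x y)).+1 * B.+1 ^ size r
      else (rank p x y).+1 * B.+1 ^ size r + gpot x s1
  | _ => 0
  end.

Lemma gmatch_cons p (x y : V) r : gmatch p (x :: y :: r) =
  if d x y != 1 then Some (true, x :: next p x y :: y :: r)
  else if cancels p x y r then Some (false, x :: r)
  else cons_match x (gmatch x (y :: r)).
Proof. by []. Qed.

Lemma gmatch_unit p (x y : V) r : d x y = 1 -> gmatch p (x :: y :: r) =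
  if cancels p x y r then Some (false, x :: r) else cons_match x (gmatch x (y :: r)).
Proof. by move=> H; rewrite gmatch_cons H. Qed.

Lemma gpot_unit p (x y : V) r : d x y = 1 ->
  gpot p (x :: y :: r) = (rank p x y).+1 * B.+1 ^ size r + gpot x (y :: r).
Proof. by move=> H; rewrite /= H. Qed.

Lemma gpot_long p (x y : V) r : d x y != 1 ->
  gpot p (x :: y :: r) = (rank p x (next p x y)).+1 * B.+1 ^ size r.
Proof. by move=> H; rewrite /= H. Qed.

Lemma gmatch_head p (x : V) s b t : gmatch p (x :: s) = Some (b, t) ->
  exists t1, t = x :: t1.
Proof.
case: s => [|y r] //; rewrite gmatch_cons.
case: ifP => _; first by move=> [_ <-]; eexists.
case: ifP => _; first by move=> [_ <-]; eexists.
by case: (gmatch x (y :: r)) => [[b1 t1]|] //= [_ <-]; eexists.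
Qed.

Lemma gmatch_size p s b t : gmatch p s = Some (b, t) ->
  size t = if b then (size s).+1 else (size s).-1.
Proof.
elim: s p b t => [|x [|y r] IH] p b t //; rewrite gmatch_cons.
case: ifP => _; first by case=> <- <-.
case: ifP => _; first by case=> <- <-.
case E: (gmatch x (y :: r)) => [[b1 t1]|] //= [<- <-] /=.
by rewrite (IH _ _ _ E); case: b1 {E}.
Qed.

Lemma Some_inj_cons (x y : V) l1 l2 (b1 b2 : bool) :
  Some (b1, x :: l1) = Some (b2, y :: l2) -> l1 = l2.
Proof. by case. Qed.

Lemma Some_inj (l1 l2 : seq V) (b1 b2 : bool) :
  Some (b1, l1) = Some (b2, l2) -> b1 = b2 /\ l1 = l2.
Proof. by case=> -> ->. Qed.

Lemma gmatch_adj p s b t : adj_distinct s -> gmatch p s = Some (b, t) ->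
  adj_distinct t.
Proof.
elim: s p b t => [|x [|y r] IH] p b t //.
rewrite adj_cons2 gmatch_cons => /andP [Hxy Had].
case: ifP => H1.
  move=> /Some_inj [_ <-]; rewrite !adj_cons2 Had andbT.
  have Hs := next_geod p Hxy H1; have Hs1 := next_adj p Hxy H1.
  rewrite gdist_neq ?Hs1 //= gdist_neq //.
  have : 0 < d x y by rewrite gdist_gt0.
  by move: H1; rewrite Hs Hs1; case: (d (next p x y) y).
case: ifP => Hev.
  move=> /Some_inj [_ <-].
  case: r Hev Had {IH} => [|z r'] //= /andP [/eqP Hz _] /andP [Hyz Had].
  by rewrite Had andbT gdist_neq // Hz (gdist_not1 H1).
case E: (gmatch x (y :: r)) => [[b1 t1]|] // /Some_inj [_ <-].
have [t2 Et2] := gmatch_head E; rewrite Et2 adj_cons2 Hxy -Et2.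
exact: IH Had E.
Qed.

Lemma gmatch_coh p (x y : V) r b r2 : d x y = 1 -> adj_distinct (y :: r) ->
  gmatch x (y :: r) = Some (b, y :: r2) -> cancels p x y r = cancels p x y r2.
Proof.
move=> Dxy; case: r => [|z r'] // Had; rewrite gmatch_cons.
move: Had; rewrite adj_cons2 => /andP [Hyz Had].
case H1: (d y z != 1).
  move=> /Some_inj_cons <- /=; apply: next_coh => //.
  by move: H1 (gdist_gt0 e Hyz); case: (d y z) => [|[|n]].
case Hev: (cancels x y z r').
  move=> /Some_inj_cons <-.
  case: r' Hev Had => [|z2 r''] // /andP [/eqP Hz /eqP Hnext].
  rewrite adj_cons2 => /andP [Hzz _].
  have H2 : 2 <= d y z2 by rewrite Hz (gdist_not1 H1) ltnS gdist_gt0.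
  by have := next_coh p Dxy H2; rewrite Hnext.
case E: (gmatch y (z :: r')) => [[b1 t1]|] //= /Some_inj_cons <-.
by have [t2 ->] := gmatch_head E.
Qed.

Lemma gmatch_inv p s b t : adj_distinct s -> gmatch p s = Some (b, t) ->
  gmatch p t = Some (~~ b, s).
Proof.
elim: s p b t => [|x [|y r] IH] p b t //.
rewrite adj_cons2 gmatch_cons => /andP [Hxy Had].
case: ifP => H1.
  move=> /Some_inj [<- <-]; rewrite gmatch_unit ?(next_adj p Hxy H1) //.
  by rewrite /cancels -(next_geod p Hxy H1) !eqxx.
case: ifP => Hev.
  move=> /Some_inj [<- <-].
  case: r Hev Had {IH} => [|z r'] // /andP [/eqP Hz /eqP Hnext].
  rewrite adj_cons2 => /andP [Hyz _].
  by rewrite gmatch_cons Hz (gdist_not1 H1) add1n eqSS gdist_eq0 Hyz /= Hnext.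
case E: (gmatch x (y :: r)) => [[b1 t1]|] // /Some_inj [<- <-].
have [r2 Et2] := gmatch_head E.
have E' : gmatch x (y :: r) = Some (b1, y :: r2) by rewrite E Et2.
rewrite Et2 gmatch_unit ?(gdist_not1 H1) //.
by rewrite -(gmatch_coh p (gdist_not1 H1) Had E') Hev -Et2 (IH _ _ _ Had E).
Qed.

(* An unmatched tuple consists of unit steps, so it lies on the diagonal. *)
Lemma gmatch_crit p s : adj_distinct s -> gmatch p s = None -> gl s = (size s).-1.
Proof.
elim: s p => [|x [|y r] IH] p //.
rewrite adj_cons2 gmatch_cons => /andP [Hxy Had].
case: ifP => H1 //; case: ifP => Hev //.
case E: (gmatch x (y :: r)) => [[b1 t1]|] // _.
by rewrite glen_cons2 (IH _ Had E) (gdist_not1 H1).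
Qed.

Lemma gmatch_face p s t : adj_distinct s -> gmatch p s = Some (true, t) ->
  exists2 i, on_geodesic e i t & face i t = s.
Proof.
elim: s p t => [|x [|y r] IH] p t //.
rewrite adj_cons2 gmatch_cons => /andP [Hxy Had].
case: ifP => H1.
  move=> /Some_inj [_ <-]; exists 1 => //.
  by rewrite /on_geodesic /= addnA -(next_geod p Hxy H1).
case: ifP => Hev //.
case E: (gmatch x (y :: r)) => [[b1 t1]|] // /Some_inj [Hb <-].
rewrite Hb in E; have [i Hg Hf] := IH _ _ Had E.
have [r2 Et2] := gmatch_head E.
have /andP [i0 _] := on_geodesic_range Hg.
by exists i.+1; rewrite ?face_cons ?Hf // Et2 on_geodesic_cons // -Et2.
Qed.

Lemma gmatch_up_unit (x y : V) r z r3 : adj_distinct (y :: r) ->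
  gmatch x (y :: r) = Some (true, y :: z :: r3) -> d y z = 1.
Proof.
case: r => [|w r'] //; rewrite adj_cons2 gmatch_cons => /andP [Hyw _].
case: ifP => H1; first by move=> /Some_inj_cons [<- _]; apply: next_adj.
case: ifP => Hev //.
case E: (gmatch y (w :: r')) => [[b1 t1]|] // /Some_inj_cons.
by have [t2 ->] := gmatch_head E => -[<- _]; apply: gdist_not1.
Qed.

Lemma gpot_pos p s : 1 < size s -> 0 < gpot p s.
Proof.
case: s => [|x [|y r]] // _ /=.
by case: ifP => _; rewrite ?addn_gt0 muln_gt0 expn_gt0.
Qed.

Lemma gpot_bound p s : gpot p s < B.+1 ^ (size s).-1.
Proof.
elim: s p => [|x [|y r] IH] p //.
rewrite [(size _).-1]/= expnS.
case: (eqVneq (d x y) 1) => [Dxy|H1].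
  have := IH x; have := rank_lt p x y; rewrite gpot_unit // [(size _).-1]/=.
  by move: (B.+1 ^ size r) (gpot x (y :: r)) => X Q; nia.
by rewrite gpot_long // ltn_pmul2r ?expn_gt0 // ltnS rank_lt.
Qed.

(* Deleting a unit step x -> y that does not cancel, in favour of a
   geodesic x -> z, raises the potential: y is outranked by the chosen first
   step z from x. *)
Lemma gpot_delete_second p (x y z : V) r r3 : d x y = 1 -> adj_distinct (y :: r) ->
  cancels p x y r = false -> gmatch x (y :: r) = Some (true, y :: z :: r3) ->
  d x z = d x y + d y z -> gpot p (x :: y :: r) < gpot p (x :: z :: r3).
Proof.
move=> Dxy Had Hev E Dxz.
have Dyz : d y z = 1 := gmatch_up_unit Had E.
have Hsr : size r3 = size r by have := gmatch_size E => /= -[].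
rewrite Dxy Dyz in Dxz.
have Hc := gmatch_coh p Dxy Had E; rewrite Hev /cancels Dxz Dxy Dyz eqxx /= in Hc.
rewrite (@gpot_unit p x y r Dxy) (@gpot_long p x z r3) ?Dxz //.
have Hrk := rank_next Dxy Dyz Dxz (negbT (esym Hc)).
have := gpot_bound x (y :: r); rewrite Hsr [(size _).-1]/=.
by move: (B.+1 ^ size r) (gpot x (y :: r)) => X Q; nia.
Qed.

Lemma gmatch_grad p s t i u : adj_distinct s -> gmatch p s = Some (true, t) ->
  on_geodesic e i t -> face i t != s -> gmatch p (face i t) = Some (true, u) ->
  gpot p s < gpot p (face i t).
Proof.
elim: s p t i u => [|x [|y r] IH] p t i u //.
rewrite adj_cons2 => /andP [Hxy Had]; rewrite gmatch_cons; case: ifP => H1.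
  move=> /Some_inj [_ <-]; have Dxv := next_adj p Hxy H1.
  case: i => [|[|[|i]]] //.
  - by move=> _; rewrite /= eqxx.
  - case: r Had {IH} => [|z r'] // Had _ _ _.
    rewrite [face 2 _]/= gpot_long // gpot_unit //.
    by rewrite -[X in X < _]addn0 ltn_add2l gpot_pos.
  - move=> _ _; rewrite [face _ _]/= gmatch_unit //.
    by rewrite /cancels -(next_geod p Hxy H1) !eqxx.
case: ifP => Hev //.
case E: (gmatch x (y :: r)) => [[b1 t1]|] // /Some_inj [Hb <-].
rewrite Hb in E; have [r2 Et2] := gmatch_head E.
have Dxy := gdist_not1 H1.
have Sz := gmatch_size E; rewrite Et2 /= in Sz; case: Sz => Sz.
case: i => [|[|i]] //.
- (* deleting y: the step to y is outranked by the chosen first step *)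
  case: r2 Et2 Sz => [|z r3] Et2 Sz //.
  rewrite Et2 on_geodesic1 => /eqP Dxz _ _; rewrite [face 1 _]/=.
  by apply: gpot_delete_second Dxy Had Hev _ Dxz; rewrite E Et2.
-
  rewrite Et2 on_geodesic_cons // => Hg Hne.
  have Hne' : face i.+1 t1 != y :: r.
    by apply: contraNneq Hne => Hf; rewrite face_cons -Et2 Hf.
  rewrite !face_cons gmatch_unit //; case: ifP => Hev2 //.
  case E2: (gmatch x (y :: face i r2)) => [[b2 u2]|] // /Some_inj [Hb2 _].
  rewrite Hb2 in E2.
  have Hg' : on_geodesic e i.+1 t1 by rewrite Et2.
  have := IH x t1 i.+1 u2 Had E Hg' Hne'; rewrite Et2 face_cons => /(_ E2) HI.
  rewrite !gpot_unit //.
  have /andP [_ Hi] := on_geodesic_range Hg.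
  rewrite size_face; last exact: ltnW.
  by rewrite Sz /= ltn_add2l.
Qed.

(* On whole tuples the scan starts with the first vertex as its own
   predecessor. *)
Definition matching (s : seq V) : option (bool * seq V) :=
  if s is x :: _ then gmatch x s else None.

Definition potential (s : seq V) : nat := if s is x :: _ then gpot x s else 0.

Lemma matching_inv s b t : adj_distinct s -> matching s = Some (b, t) ->
  matching t = Some (~~ b, s).
Proof.
case: s => [|x s1] // Had H; have [t1 Et] := gmatch_head H.
rewrite Et; change (gmatch x (x :: t1) = Some (~~ b, x :: s1)).
by rewrite -Et; apply: gmatch_inv.
Qed.

Lemma matching_adj s b t : adj_distinct s -> matching s = Some (b, t) ->
  adj_distinct t.
Proof. by case: s => [|x s1] //; apply: gmatch_adj. Qed.

Lemma matching_face s t : adj_distinct s -> matching s = Some (true, t) ->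
  exists2 i, on_geodesic e i t & face i t = s.
Proof. by case: s => [|x s1] //; apply: gmatch_face. Qed.

Lemma matching_crit s : adj_distinct s -> matching s = None -> gl s = (size s).-1.
Proof. by case: s => [|x s1] //; apply: gmatch_crit. Qed.

Lemma potential_bound s : potential s < B.+1 ^ (size s).-1.
Proof. by case: s => [|x s1] //; apply: gpot_bound. Qed.

Lemma matching_grad s t i u : adj_distinct s -> matching s = Some (true, t) ->
  on_geodesic e i t -> face i t != s -> matching (face i t) = Some (true, u) ->
  potential s < potential (face i t).
Proof.
case: s => [|a s1] // Had H Hg Hne; have [t1 Et] := gmatch_head H.
have /andP [Hi0 _] := on_geodesic_range Hg.
case: i Hi0 Hg Hne => // i _ Hg Hne.
have := gmatch_grad Had H Hg Hne; rewrite Et face_cons => Hgrad.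
exact: Hgrad.
Qed.

Hypothesis gdist_tri : forall x y z : V, d x z <= d x y + d y z.

Theorem geodesic_matching_diagonal : diagonal e.
Proof.
apply: (@acyclic_matching_diagonal V e gdist_tri matching potential
          (fun n => B.+1 ^ n.-1)).
- exact: matching_inv.
- exact: matching_adj.
- exact: matching_face.
- exact: potential_bound.
- exact: matching_grad.
- exact: matching_crit.
Qed.

End GeodesicMatching.

Section Icosahedron.

Local Notation V := 'I_12.
Local Notation d := (gdist ico_edge).

(* Certificate data, indexed by vertex numbers: the distance matrix of the
   icosahedral graph, the chosen first steps [next_tab p x y] and the ranks
   [rank_tab p x y]. *)
Definition dist_tab : seq (seq nat) :=
  [:: [:: 0; 1; 1; 1; 1; 1; 2; 2; 2; 2; 2; 3];
      [:: 1; 0; 1; 2; 2; 1; 1; 1; 2; 3; 2; 2];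
      [:: 1; 1; 0; 1; 2; 2; 2; 1; 1; 2; 3; 2];
      [:: 1; 2; 1; 0; 1; 2; 3; 2; 1; 1; 2; 2];
      [:: 1; 2; 2; 1; 0; 1; 2; 3; 2; 1; 1; 2];
      [:: 1; 1; 2; 2; 1; 0; 1; 2; 3; 2; 1; 2];
      [:: 2; 1; 2; 3; 2; 1; 0; 1; 2; 2; 1; 1];
      [:: 2; 1; 1; 2; 3; 2; 1; 0; 1; 2; 2; 1];
      [:: 2; 2; 1; 1; 2; 3; 2; 1; 0; 1; 2; 1];
      [:: 2; 3; 2; 1; 1; 2; 2; 2; 1; 0; 1; 1];
      [:: 2; 2; 3; 2; 1; 1; 1; 2; 2; 1; 0; 1];
      [:: 3; 2; 2; 2; 2; 2; 1; 1; 1; 1; 1; 0]].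

Definition next_tab : seq (seq (seq nat)) :=
  [::
    [:: [:: 0; 0; 0; 0; 0; 0; 1; 2; 2; 4; 5; 2];
        [:: 1; 1; 1; 0; 5; 1; 1; 1; 2; 5; 5; 7];
        [:: 2; 2; 2; 2; 0; 1; 1; 2; 2; 3; 1; 8];
        [:: 3; 2; 3; 3; 3; 0; 2; 2; 3; 3; 4; 9];
        [:: 4; 0; 3; 4; 4; 4; 5; 3; 3; 4; 4; 10];
        [:: 5; 5; 0; 4; 5; 5; 5; 1; 4; 4; 5; 6];
        [:: 5; 6; 1; 5; 5; 6; 6; 6; 7; 11; 6; 6];
        [:: 1; 7; 7; 2; 6; 6; 7; 7; 7; 8; 6; 7];
        [:: 2; 7; 8; 8; 3; 7; 7; 8; 8; 8; 9; 8];
        [:: 3; 8; 8; 9; 9; 4; 10; 8; 9; 9; 9; 9];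
        [:: 4; 5; 9; 9; 10; 10; 10; 6; 9; 10; 10; 10];
        [:: 10; 6; 7; 8; 10; 10; 11; 11; 11; 11; 11; 11]];
    [:: [:: 0; 0; 0; 0; 0; 0; 1; 2; 2; 4; 5; 2];
        [:: 1; 1; 1; 0; 5; 1; 1; 1; 2; 5; 5; 7];
        [:: 2; 2; 2; 2; 0; 1; 7; 2; 2; 3; 7; 7];
        [:: 3; 2; 3; 3; 3; 0; 2; 2; 3; 3; 4; 9];
        [:: 4; 0; 3; 4; 4; 4; 5; 3; 3; 4; 4; 10];
        [:: 5; 5; 0; 0; 5; 5; 5; 1; 0; 10; 5; 6];
        [:: 5; 6; 1; 5; 5; 6; 6; 6; 7; 11; 6; 6];
        [:: 1; 7; 7; 2; 6; 6; 7; 7; 7; 8; 6; 7];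
        [:: 2; 7; 8; 8; 3; 7; 7; 8; 8; 8; 9; 8];
        [:: 3; 8; 8; 9; 9; 4; 10; 8; 9; 9; 9; 9];
        [:: 4; 5; 9; 9; 10; 10; 10; 6; 9; 10; 10; 10];
        [:: 10; 6; 7; 8; 10; 10; 11; 11; 11; 11; 11; 11]];
    [:: [:: 0; 0; 0; 0; 0; 0; 1; 2; 3; 3; 5; 3];
        [:: 1; 1; 1; 0; 0; 1; 1; 1; 2; 0; 6; 7];
        [:: 2; 2; 2; 2; 0; 1; 1; 2; 2; 3; 1; 8];
        [:: 3; 2; 3; 3; 3; 0; 8; 8; 3; 3; 4; 8];
        [:: 4; 0; 3; 4; 4; 4; 5; 3; 3; 4; 4; 10];
        [:: 5; 5; 0; 4; 5; 5; 5; 1; 4; 4; 5; 6];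
        [:: 5; 6; 1; 5; 5; 6; 6; 6; 7; 11; 6; 6];
        [:: 1; 7; 7; 2; 1; 1; 7; 7; 7; 8; 11; 7];
        [:: 2; 7; 8; 8; 3; 7; 7; 8; 8; 8; 9; 8];
        [:: 3; 8; 8; 9; 9; 4; 10; 8; 9; 9; 9; 9];
        [:: 4; 5; 9; 9; 10; 10; 10; 6; 9; 10; 10; 10];
        [:: 10; 6; 7; 8; 10; 10; 11; 11; 11; 11; 11; 11]];
    [:: [:: 0; 0; 0; 0; 0; 0; 1; 2; 3; 4; 4; 4];
        [:: 1; 1; 1; 0; 5; 1; 1; 1; 2; 5; 5; 7];
        [:: 2; 2; 2; 2; 0; 0; 7; 2; 2; 3; 0; 8];
        [:: 3; 2; 3; 3; 3; 0; 2; 2; 3; 3; 4; 9];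
        [:: 4; 0; 3; 4; 4; 4; 5; 9; 9; 4; 4; 9];
        [:: 5; 5; 0; 4; 5; 5; 5; 1; 4; 4; 5; 6];
        [:: 5; 6; 1; 5; 5; 6; 6; 6; 7; 11; 6; 6];
        [:: 1; 7; 7; 2; 6; 6; 7; 7; 7; 8; 6; 7];
        [:: 2; 2; 8; 8; 3; 2; 11; 8; 8; 8; 9; 8];
        [:: 3; 8; 8; 9; 9; 4; 10; 8; 9; 9; 9; 9];
        [:: 4; 5; 9; 9; 10; 10; 10; 6; 9; 10; 10; 10];
        [:: 10; 6; 7; 8; 10; 10; 11; 11; 11; 11; 11; 11]];
    [:: [:: 0; 0; 0; 0; 0; 0; 5; 2; 3; 4; 5; 5];
        [:: 1; 1; 1; 0; 5; 1; 1; 1; 2; 5; 5; 7];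
        [:: 2; 2; 2; 2; 0; 1; 1; 2; 2; 3; 1; 8];
        [:: 3; 0; 3; 3; 3; 0; 0; 8; 3; 3; 4; 9];
        [:: 4; 0; 3; 4; 4; 4; 5; 3; 3; 4; 4; 10];
        [:: 5; 5; 0; 4; 5; 5; 5; 1; 10; 10; 5; 10];
        [:: 5; 6; 1; 5; 5; 6; 6; 6; 7; 11; 6; 6];
        [:: 1; 7; 7; 2; 6; 6; 7; 7; 7; 8; 6; 7];
        [:: 2; 7; 8; 8; 3; 7; 7; 8; 8; 8; 9; 8];
        [:: 3; 3; 3; 9; 9; 4; 10; 11; 9; 9; 9; 9];
        [:: 4; 5; 9; 9; 10; 10; 10; 6; 9; 10; 10; 10];
        [:: 10; 6; 7; 8; 10; 10; 11; 11; 11; 11; 11; 11]];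
    [:: [:: 0; 0; 0; 0; 0; 0; 1; 1; 3; 4; 5; 1];
        [:: 1; 1; 1; 0; 5; 1; 1; 1; 2; 6; 6; 6];
        [:: 2; 2; 2; 2; 0; 1; 1; 2; 2; 3; 1; 8];
        [:: 3; 2; 3; 3; 3; 0; 2; 2; 3; 3; 4; 9];
        [:: 4; 0; 0; 4; 4; 4; 5; 0; 9; 4; 4; 10];
        [:: 5; 5; 0; 4; 5; 5; 5; 1; 4; 4; 5; 6];
        [:: 5; 6; 1; 10; 10; 6; 6; 6; 7; 10; 6; 6];
        [:: 1; 7; 7; 2; 6; 6; 7; 7; 7; 8; 6; 7];
        [:: 2; 7; 8; 8; 3; 7; 7; 8; 8; 8; 9; 8];
        [:: 3; 8; 8; 9; 9; 4; 10; 8; 9; 9; 9; 9];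
        [:: 4; 5; 4; 4; 10; 10; 10; 6; 11; 10; 10; 10];
        [:: 10; 6; 7; 8; 10; 10; 11; 11; 11; 11; 11; 11]];
    [:: [:: 0; 0; 0; 0; 0; 0; 1; 2; 2; 4; 5; 2];
        [:: 1; 1; 1; 0; 5; 1; 1; 1; 7; 7; 6; 7];
        [:: 2; 2; 2; 2; 0; 1; 1; 2; 2; 3; 1; 8];
        [:: 3; 2; 3; 3; 3; 0; 2; 2; 3; 3; 4; 9];
        [:: 4; 0; 3; 4; 4; 4; 5; 3; 3; 4; 4; 10];
        [:: 5; 5; 1; 4; 5; 5; 5; 1; 1; 10; 5; 6];
        [:: 5; 6; 1; 5; 5; 6; 6; 6; 7; 11; 6; 6];
        [:: 1; 7; 7; 2; 11; 6; 7; 7; 7; 11; 11; 7];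
        [:: 2; 7; 8; 8; 3; 7; 7; 8; 8; 8; 9; 8];
        [:: 3; 8; 8; 9; 9; 4; 10; 8; 9; 9; 9; 9];
        [:: 5; 5; 5; 9; 10; 10; 10; 6; 11; 10; 10; 10];
        [:: 10; 6; 7; 8; 10; 10; 11; 11; 11; 11; 11; 11]];
    [:: [:: 0; 0; 0; 0; 0; 0; 1; 2; 2; 4; 5; 2];
        [:: 1; 1; 1; 2; 5; 1; 1; 1; 2; 2; 6; 7];
        [:: 2; 2; 2; 2; 0; 1; 7; 2; 2; 8; 8; 8];
        [:: 3; 2; 3; 3; 3; 0; 2; 2; 3; 3; 4; 9];
        [:: 4; 0; 3; 4; 4; 4; 5; 3; 3; 4; 4; 10];
        [:: 5; 5; 0; 4; 5; 5; 5; 1; 4; 4; 5; 6];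
        [:: 1; 6; 1; 1; 10; 6; 6; 6; 7; 11; 6; 6];
        [:: 1; 7; 7; 2; 6; 6; 7; 7; 7; 8; 6; 7];
        [:: 2; 7; 8; 8; 3; 11; 11; 8; 8; 8; 11; 8];
        [:: 3; 8; 8; 9; 9; 4; 10; 8; 9; 9; 9; 9];
        [:: 4; 5; 9; 9; 10; 10; 10; 6; 9; 10; 10; 10];
        [:: 6; 6; 7; 8; 9; 6; 11; 11; 11; 11; 11; 11]];
    [:: [:: 0; 0; 0; 0; 0; 0; 1; 2; 2; 4; 5; 2];
        [:: 1; 1; 1; 0; 5; 1; 1; 1; 2; 5; 5; 7];
        [:: 2; 2; 2; 2; 3; 1; 7; 2; 2; 3; 3; 8];
        [:: 3; 2; 3; 3; 3; 0; 9; 8; 3; 3; 9; 9];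
        [:: 4; 0; 3; 4; 4; 4; 5; 3; 3; 4; 4; 10];
        [:: 5; 5; 0; 4; 5; 5; 5; 1; 4; 4; 5; 6];
        [:: 5; 6; 1; 5; 5; 6; 6; 6; 7; 11; 6; 6];
        [:: 2; 7; 7; 2; 2; 6; 7; 7; 7; 8; 11; 7];
        [:: 2; 7; 8; 8; 3; 7; 7; 8; 8; 8; 9; 8];
        [:: 3; 11; 8; 9; 9; 4; 11; 11; 9; 9; 9; 9];
        [:: 4; 5; 9; 9; 10; 10; 10; 6; 9; 10; 10; 10];
        [:: 7; 7; 7; 8; 9; 10; 11; 11; 11; 11; 11; 11]];
    [:: [:: 0; 0; 0; 0; 0; 0; 1; 2; 2; 4; 5; 2];
        [:: 1; 1; 1; 0; 5; 1; 1; 1; 2; 5; 5; 7];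
        [:: 2; 2; 2; 2; 0; 1; 1; 2; 2; 3; 1; 8];
        [:: 3; 2; 3; 3; 3; 4; 4; 8; 3; 3; 4; 9];
        [:: 4; 0; 3; 4; 4; 4; 10; 10; 9; 4; 4; 10];
        [:: 5; 5; 0; 4; 5; 5; 5; 1; 4; 4; 5; 6];
        [:: 5; 6; 1; 5; 5; 6; 6; 6; 7; 11; 6; 6];
        [:: 1; 7; 7; 2; 6; 6; 7; 7; 7; 8; 6; 7];
        [:: 3; 7; 8; 8; 3; 3; 11; 8; 8; 8; 9; 8];
        [:: 3; 8; 8; 9; 9; 4; 10; 8; 9; 9; 9; 9];
        [:: 4; 5; 11; 9; 10; 10; 10; 11; 11; 10; 10; 10];
        [:: 8; 6; 8; 8; 9; 10; 11; 11; 11; 11; 11; 11]];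
    [:: [:: 0; 0; 0; 0; 0; 0; 1; 2; 2; 4; 5; 2];
        [:: 1; 1; 1; 0; 5; 1; 1; 1; 2; 5; 5; 7];
        [:: 2; 2; 2; 2; 0; 1; 1; 2; 2; 3; 1; 8];
        [:: 3; 2; 3; 3; 3; 0; 2; 2; 3; 3; 4; 9];
        [:: 4; 5; 3; 4; 4; 4; 5; 5; 9; 4; 4; 10];
        [:: 5; 5; 0; 4; 5; 5; 5; 6; 6; 10; 5; 6];
        [:: 5; 6; 1; 11; 10; 6; 6; 6; 11; 11; 6; 6];
        [:: 1; 7; 7; 2; 6; 6; 7; 7; 7; 8; 6; 7];
        [:: 2; 7; 8; 8; 3; 7; 7; 8; 8; 8; 9; 8];
        [:: 4; 4; 8; 9; 9; 4; 10; 11; 9; 9; 9; 9];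
        [:: 4; 5; 9; 9; 10; 10; 10; 6; 9; 10; 10; 10];
        [:: 9; 6; 7; 9; 9; 10; 11; 11; 11; 11; 11; 11]];
    [:: [:: 0; 0; 0; 0; 0; 0; 1; 2; 2; 4; 5; 2];
        [:: 1; 1; 1; 0; 5; 1; 1; 1; 2; 5; 5; 7];
        [:: 2; 2; 2; 2; 0; 1; 1; 2; 2; 3; 1; 8];
        [:: 3; 2; 3; 3; 3; 0; 2; 2; 3; 3; 4; 9];
        [:: 4; 0; 3; 4; 4; 4; 5; 3; 3; 4; 4; 10];
        [:: 5; 5; 0; 4; 5; 5; 5; 1; 4; 4; 5; 6];
        [:: 5; 6; 7; 7; 10; 6; 6; 6; 7; 11; 6; 6];
        [:: 1; 7; 7; 8; 8; 6; 7; 7; 7; 8; 11; 7];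
        [:: 2; 7; 8; 8; 9; 9; 11; 8; 8; 8; 9; 8];
        [:: 3; 10; 8; 9; 9; 10; 10; 11; 9; 9; 9; 9];
        [:: 4; 6; 6; 9; 10; 10; 10; 6; 11; 10; 10; 10];
        [:: 10; 6; 7; 8; 10; 10; 11; 11; 11; 11; 11; 11]]].

Definition rank_tab : seq (seq (seq nat)) :=
  [::
    [:: [:: 0; 4; 5; 1; 2; 3; 0; 0; 0; 0; 0; 0];
        [:: 4; 0; 3; 0; 0; 5; 1; 2; 0; 0; 0; 0];
        [:: 4; 5; 0; 3; 0; 0; 0; 1; 2; 0; 0; 0];
        [:: 4; 0; 5; 0; 3; 0; 0; 0; 1; 2; 0; 0];
        [:: 4; 0; 0; 5; 0; 3; 0; 0; 0; 1; 2; 0];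
        [:: 4; 3; 0; 0; 5; 0; 2; 0; 0; 0; 1; 0];
        [:: 0; 4; 0; 0; 0; 5; 0; 3; 0; 0; 1; 2];
        [:: 0; 4; 3; 0; 0; 0; 5; 0; 2; 0; 0; 1];
        [:: 0; 0; 4; 3; 0; 0; 0; 5; 0; 2; 0; 1];
        [:: 0; 0; 0; 4; 3; 0; 0; 0; 5; 0; 2; 1];
        [:: 0; 0; 0; 0; 4; 3; 2; 0; 0; 5; 0; 1];
        [:: 0; 0; 0; 0; 0; 0; 4; 3; 2; 1; 5; 0]];
    [:: [:: 0; 4; 5; 1; 2; 3; 0; 0; 0; 0; 0; 0];
        [:: 4; 0; 3; 0; 0; 5; 1; 2; 0; 0; 0; 0];
        [:: 3; 4; 0; 2; 0; 0; 0; 5; 1; 0; 0; 0];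
        [:: 4; 0; 5; 0; 3; 0; 0; 0; 1; 2; 0; 0];
        [:: 4; 0; 0; 5; 0; 3; 0; 0; 0; 1; 2; 0];
        [:: 5; 4; 0; 0; 1; 0; 3; 0; 0; 0; 2; 0];
        [:: 0; 4; 0; 0; 0; 5; 0; 3; 0; 0; 1; 2];
        [:: 0; 4; 3; 0; 0; 0; 5; 0; 2; 0; 0; 1];
        [:: 0; 0; 4; 3; 0; 0; 0; 5; 0; 2; 0; 1];
        [:: 0; 0; 0; 4; 3; 0; 0; 0; 5; 0; 2; 1];
        [:: 0; 0; 0; 0; 4; 3; 2; 0; 0; 5; 0; 1];
        [:: 0; 0; 0; 0; 0; 0; 4; 3; 2; 1; 5; 0]];
    [:: [:: 0; 3; 4; 5; 1; 2; 0; 0; 0; 0; 0; 0];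
        [:: 5; 0; 4; 0; 0; 1; 2; 3; 0; 0; 0; 0];
        [:: 4; 5; 0; 3; 0; 0; 0; 1; 2; 0; 0; 0];
        [:: 3; 0; 4; 0; 2; 0; 0; 0; 5; 1; 0; 0];
        [:: 4; 0; 0; 5; 0; 3; 0; 0; 0; 1; 2; 0];
        [:: 4; 3; 0; 0; 5; 0; 2; 0; 0; 0; 1; 0];
        [:: 0; 4; 0; 0; 0; 5; 0; 3; 0; 0; 1; 2];
        [:: 0; 5; 4; 0; 0; 0; 1; 0; 3; 0; 0; 2];
        [:: 0; 0; 4; 3; 0; 0; 0; 5; 0; 2; 0; 1];
        [:: 0; 0; 0; 4; 3; 0; 0; 0; 5; 0; 2; 1];
        [:: 0; 0; 0; 0; 4; 3; 2; 0; 0; 5; 0; 1];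
        [:: 0; 0; 0; 0; 0; 0; 4; 3; 2; 1; 5; 0]];
    [:: [:: 0; 2; 3; 4; 5; 1; 0; 0; 0; 0; 0; 0];
        [:: 4; 0; 3; 0; 0; 5; 1; 2; 0; 0; 0; 0];
        [:: 5; 1; 0; 4; 0; 0; 0; 2; 3; 0; 0; 0];
        [:: 4; 0; 5; 0; 3; 0; 0; 0; 1; 2; 0; 0];
        [:: 3; 0; 0; 4; 0; 2; 0; 0; 0; 5; 1; 0];
        [:: 4; 3; 0; 0; 5; 0; 2; 0; 0; 0; 1; 0];
        [:: 0; 4; 0; 0; 0; 5; 0; 3; 0; 0; 1; 2];
        [:: 0; 4; 3; 0; 0; 0; 5; 0; 2; 0; 0; 1];
        [:: 0; 0; 5; 4; 0; 0; 0; 1; 0; 3; 0; 2];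
        [:: 0; 0; 0; 4; 3; 0; 0; 0; 5; 0; 2; 1];
        [:: 0; 0; 0; 0; 4; 3; 2; 0; 0; 5; 0; 1];
        [:: 0; 0; 0; 0; 0; 0; 4; 3; 2; 1; 5; 0]];
    [:: [:: 0; 1; 2; 3; 4; 5; 0; 0; 0; 0; 0; 0];
        [:: 4; 0; 3; 0; 0; 5; 1; 2; 0; 0; 0; 0];
        [:: 4; 5; 0; 3; 0; 0; 0; 1; 2; 0; 0; 0];
        [:: 5; 0; 1; 0; 4; 0; 0; 0; 2; 3; 0; 0];
        [:: 4; 0; 0; 5; 0; 3; 0; 0; 0; 1; 2; 0];
        [:: 3; 2; 0; 0; 4; 0; 1; 0; 0; 0; 5; 0];
        [:: 0; 4; 0; 0; 0; 5; 0; 3; 0; 0; 1; 2];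
        [:: 0; 4; 3; 0; 0; 0; 5; 0; 2; 0; 0; 1];
        [:: 0; 0; 4; 3; 0; 0; 0; 5; 0; 2; 0; 1];
        [:: 0; 0; 0; 5; 4; 0; 0; 0; 1; 0; 3; 2];
        [:: 0; 0; 0; 0; 4; 3; 2; 0; 0; 5; 0; 1];
        [:: 0; 0; 0; 0; 0; 0; 4; 3; 2; 1; 5; 0]];
    [:: [:: 0; 5; 1; 2; 3; 4; 0; 0; 0; 0; 0; 0];
        [:: 3; 0; 2; 0; 0; 4; 5; 1; 0; 0; 0; 0];
        [:: 4; 5; 0; 3; 0; 0; 0; 1; 2; 0; 0; 0];
        [:: 4; 0; 5; 0; 3; 0; 0; 0; 1; 2; 0; 0];
        [:: 5; 0; 0; 1; 0; 4; 0; 0; 0; 2; 3; 0];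
        [:: 4; 3; 0; 0; 5; 0; 2; 0; 0; 0; 1; 0];
        [:: 0; 3; 0; 0; 0; 4; 0; 2; 0; 0; 5; 1];
        [:: 0; 4; 3; 0; 0; 0; 5; 0; 2; 0; 0; 1];
        [:: 0; 0; 4; 3; 0; 0; 0; 5; 0; 2; 0; 1];
        [:: 0; 0; 0; 4; 3; 0; 0; 0; 5; 0; 2; 1];
        [:: 0; 0; 0; 0; 5; 4; 3; 0; 0; 1; 0; 2];
        [:: 0; 0; 0; 0; 0; 0; 4; 3; 2; 1; 5; 0]];
    [:: [:: 0; 4; 5; 1; 2; 3; 0; 0; 0; 0; 0; 0];
        [:: 2; 0; 1; 0; 0; 3; 4; 5; 0; 0; 0; 0];
        [:: 4; 5; 0; 3; 0; 0; 0; 1; 2; 0; 0; 0];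
        [:: 4; 0; 5; 0; 3; 0; 0; 0; 1; 2; 0; 0];
        [:: 4; 0; 0; 5; 0; 3; 0; 0; 0; 1; 2; 0];
        [:: 1; 5; 0; 0; 2; 0; 4; 0; 0; 0; 3; 0];
        [:: 0; 4; 0; 0; 0; 5; 0; 3; 0; 0; 1; 2];
        [:: 0; 3; 2; 0; 0; 0; 4; 0; 1; 0; 0; 5];
        [:: 0; 0; 4; 3; 0; 0; 0; 5; 0; 2; 0; 1];
        [:: 0; 0; 0; 4; 3; 0; 0; 0; 5; 0; 2; 1];
        [:: 0; 0; 0; 0; 1; 5; 4; 0; 0; 2; 0; 3];
        [:: 0; 0; 0; 0; 0; 0; 4; 3; 2; 1; 5; 0]];
    [:: [:: 0; 4; 5; 1; 2; 3; 0; 0; 0; 0; 0; 0];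
        [:: 1; 0; 5; 0; 0; 2; 3; 4; 0; 0; 0; 0];
        [:: 2; 3; 0; 1; 0; 0; 0; 4; 5; 0; 0; 0];
        [:: 4; 0; 5; 0; 3; 0; 0; 0; 1; 2; 0; 0];
        [:: 4; 0; 0; 5; 0; 3; 0; 0; 0; 1; 2; 0];
        [:: 4; 3; 0; 0; 5; 0; 2; 0; 0; 0; 1; 0];
        [:: 0; 5; 0; 0; 0; 1; 0; 4; 0; 0; 2; 3];
        [:: 0; 4; 3; 0; 0; 0; 5; 0; 2; 0; 0; 1];
        [:: 0; 0; 3; 2; 0; 0; 0; 4; 0; 1; 0; 5];
        [:: 0; 0; 0; 4; 3; 0; 0; 0; 5; 0; 2; 1];
        [:: 0; 0; 0; 0; 4; 3; 2; 0; 0; 5; 0; 1];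
        [:: 0; 0; 0; 0; 0; 0; 5; 4; 3; 2; 1; 0]];
    [:: [:: 0; 4; 5; 1; 2; 3; 0; 0; 0; 0; 0; 0];
        [:: 4; 0; 3; 0; 0; 5; 1; 2; 0; 0; 0; 0];
        [:: 1; 2; 0; 5; 0; 0; 0; 3; 4; 0; 0; 0];
        [:: 2; 0; 3; 0; 1; 0; 0; 0; 4; 5; 0; 0];
        [:: 4; 0; 0; 5; 0; 3; 0; 0; 0; 1; 2; 0];
        [:: 4; 3; 0; 0; 5; 0; 2; 0; 0; 0; 1; 0];
        [:: 0; 4; 0; 0; 0; 5; 0; 3; 0; 0; 1; 2];
        [:: 0; 1; 5; 0; 0; 0; 2; 0; 4; 0; 0; 3];
        [:: 0; 0; 4; 3; 0; 0; 0; 5; 0; 2; 0; 1];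
        [:: 0; 0; 0; 3; 2; 0; 0; 0; 4; 0; 1; 5];
        [:: 0; 0; 0; 0; 4; 3; 2; 0; 0; 5; 0; 1];
        [:: 0; 0; 0; 0; 0; 0; 1; 5; 4; 3; 2; 0]];
    [:: [:: 0; 4; 5; 1; 2; 3; 0; 0; 0; 0; 0; 0];
        [:: 4; 0; 3; 0; 0; 5; 1; 2; 0; 0; 0; 0];
        [:: 4; 5; 0; 3; 0; 0; 0; 1; 2; 0; 0; 0];
        [:: 1; 0; 2; 0; 5; 0; 0; 0; 3; 4; 0; 0];
        [:: 2; 0; 0; 3; 0; 1; 0; 0; 0; 4; 5; 0];
        [:: 4; 3; 0; 0; 5; 0; 2; 0; 0; 0; 1; 0];
        [:: 0; 4; 0; 0; 0; 5; 0; 3; 0; 0; 1; 2];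
        [:: 0; 4; 3; 0; 0; 0; 5; 0; 2; 0; 0; 1];
        [:: 0; 0; 1; 5; 0; 0; 0; 2; 0; 4; 0; 3];
        [:: 0; 0; 0; 4; 3; 0; 0; 0; 5; 0; 2; 1];
        [:: 0; 0; 0; 0; 3; 2; 1; 0; 0; 4; 0; 5];
        [:: 0; 0; 0; 0; 0; 0; 2; 1; 5; 4; 3; 0]];
    [:: [:: 0; 4; 5; 1; 2; 3; 0; 0; 0; 0; 0; 0];
        [:: 4; 0; 3; 0; 0; 5; 1; 2; 0; 0; 0; 0];
        [:: 4; 5; 0; 3; 0; 0; 0; 1; 2; 0; 0; 0];
        [:: 4; 0; 5; 0; 3; 0; 0; 0; 1; 2; 0; 0];
        [:: 1; 0; 0; 2; 0; 5; 0; 0; 0; 3; 4; 0];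
        [:: 2; 1; 0; 0; 3; 0; 5; 0; 0; 0; 4; 0];
        [:: 0; 2; 0; 0; 0; 3; 0; 1; 0; 0; 4; 5];
        [:: 0; 4; 3; 0; 0; 0; 5; 0; 2; 0; 0; 1];
        [:: 0; 0; 4; 3; 0; 0; 0; 5; 0; 2; 0; 1];
        [:: 0; 0; 0; 1; 5; 0; 0; 0; 2; 0; 4; 3];
        [:: 0; 0; 0; 0; 4; 3; 2; 0; 0; 5; 0; 1];
        [:: 0; 0; 0; 0; 0; 0; 3; 2; 1; 5; 4; 0]];
    [:: [:: 0; 4; 5; 1; 2; 3; 0; 0; 0; 0; 0; 0];
        [:: 4; 0; 3; 0; 0; 5; 1; 2; 0; 0; 0; 0];
        [:: 4; 5; 0; 3; 0; 0; 0; 1; 2; 0; 0; 0];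
        [:: 4; 0; 5; 0; 3; 0; 0; 0; 1; 2; 0; 0];
        [:: 4; 0; 0; 5; 0; 3; 0; 0; 0; 1; 2; 0];
        [:: 4; 3; 0; 0; 5; 0; 2; 0; 0; 0; 1; 0];
        [:: 0; 1; 0; 0; 0; 2; 0; 5; 0; 0; 3; 4];
        [:: 0; 2; 1; 0; 0; 0; 3; 0; 5; 0; 0; 4];
        [:: 0; 0; 2; 1; 0; 0; 0; 3; 0; 5; 0; 4];
        [:: 0; 0; 0; 2; 1; 0; 0; 0; 3; 0; 5; 4];
        [:: 0; 0; 0; 0; 2; 1; 5; 0; 0; 3; 0; 4];
        [:: 0; 0; 0; 0; 0; 0; 4; 3; 2; 1; 5; 0]]].

Definition dist_n (x y : nat) : nat := nth 0 (nth [::] dist_tab x) y.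
Definition next_n (p x y : nat) : nat := nth 0 (nth [::] (nth [::] next_tab p) x) y.
Definition rank_n (p x y : nat) : nat := nth 0 (nth [::] (nth [::] rank_tab p) x) y.

Definition verts : seq nat := iota 0 12.
Definition all2v (Q : nat -> nat -> bool) := all (fun x => all (Q x) verts) verts.
Definition all3v (Q : nat -> nat -> nat -> bool) := all (fun x => all2v (Q x)) verts.
Definition all4v (Q : nat -> nat -> nat -> nat -> bool) :=
  all (fun x => all3v (Q x)) verts.

Lemma vert_mem (x : V) : val x \in verts.
Proof. by rewrite mem_iota ltn_ord. Qed.

Lemma all2vP Q : all2v Q -> forall x y : V, Q x y.
Proof. by move=> H x y; apply: (allP (allP H _ (vert_mem x)) _ (vert_mem y)). Qed.

Lemma all3vP Q : all3v Q -> forall x y z : V, Q x y z.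
Proof. by move=> H x; apply: all2vP (allP H _ (vert_mem x)). Qed.

Lemma all4vP Q : all4v Q -> forall x y z w : V, Q x y z w.
Proof. by move=> H x; apply: all3vP (allP H _ (vert_mem x)). Qed.

Lemma exists_vert (Q : nat -> bool) : [exists z : V, Q z] = has Q verts.
Proof.
apply/existsP/hasP => [[z Hz]|[z Hz1 Hz2]]; first by exists (val z); rewrite ?vert_mem.
have Hz : z < 12 by rewrite mem_iota in Hz1.
by exists (Ordinal Hz).
Qed.

(* The distance table is correct: the ball of radius k around x consists of
   the vertices y with dist_n x y <= k.  It suffices to check the recursion
   defining balls up to the diameter 3. *)
Lemma ball0_tab : all2v (fun x y => (y == x) == (dist_n x y <= 0)).
Proof. by vm_compute. Qed.

Lemma ballS_tab : all2v (fun x y => all (fun k =>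
   ((dist_n x y <= k) ||
    has (fun z => (dist_n x z <= k) && (ico_adj_nat z y || ico_adj_nat y z)) verts)
   == (dist_n x y <= k.+1)) (iota 0 3)).
Proof. by vm_compute. Qed.

Lemma diameter_tab : all2v (fun x y => dist_n x y <= 3).
Proof. by vm_compute. Qed.

Lemma ball_tab k (x y : V) : (y \in ball ico_edge k x) = (dist_n x y <= k).
Proof.
elim: k y => [|k IH] y /=.
  by have /eqP <- := all2vP ball0_tab x y; rewrite in_set1.
rewrite in_setU IH in_set.
have -> : [exists z, (z \in ball ico_edge k x) && ico_edge z y] =
   [exists z : V, (dist_n x z <= k) && (ico_adj_nat z y || ico_adj_nat y z)].
  by apply: eq_existsb => z; rewrite IH.
rewrite (exists_vert (fun z =>
  (dist_n x z <= k) && (ico_adj_nat z y || ico_adj_nat y z))).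
case: (ltnP k 3) => Hk.
  by have := allP (all2vP ballS_tab x y) k; rewrite mem_iota /= => /(_ Hk) /eqP.
have H3 := all2vP diameter_tab x y.
by rewrite (leq_trans H3 Hk) (leq_trans H3 (leqW Hk)).
Qed.

Lemma ico_dist (x y : V) : d x y = dist_n x y.
Proof.
rewrite /gdist card_ord.
rewrite (eq_find (a2 := fun k => dist_n x y <= k)) => [|k]; last exact: ball_tab.
by have := all2vP diameter_tab x y; case: (dist_n x y) => [|[|[|[|n]]]].
Qed.

Lemma ico_tri (x y z : V) : d x z <= d x y + d y z.
Proof.
rewrite !ico_dist.
by apply: (all3vP (Q := fun x y z => dist_n x z <= dist_n x y + dist_n y z));
  vm_compute.
Qed.

Definition ico_next (p x y : V) : V := inord (next_n p x y).
Definition ico_rank (p x y : V) : nat := rank_n p x y.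

Lemma ico_next_val (p x y : V) : (ico_next p x y : nat) = next_n p x y.
Proof.
rewrite inordK //.
by apply: (all3vP (Q := fun p x y => next_n p x y < 12)); vm_compute.
Qed.

Lemma ico_next_eq (p x y z : V) : (ico_next p x y == z) = (next_n p x y == z).
Proof. by rewrite -val_eqE /= ico_next_val. Qed.

Lemma next_adj_tab : all3v (fun p x y => (x != y) ==> (dist_n x y != 1) ==>
  (dist_n x (next_n p x y) == 1)).
Proof. by vm_compute. Qed.

Lemma ico_next_adj (p x y : V) : x != y -> d x y != 1 -> d x (ico_next p x y) = 1.
Proof.
move=> Hxy H1; have /= := all3vP next_adj_tab p x y.
rewrite -val_eqE in Hxy; rewrite Hxy -ico_dist H1 /= ico_dist ico_next_val.
by move/eqP.
Qed.

Lemma next_geod_tab : all3v (fun p x y => (x != y) ==> (dist_n x y != 1) ==>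
  (dist_n x y == dist_n x (next_n p x y) + dist_n (next_n p x y) y)).
Proof. by vm_compute. Qed.

Lemma ico_next_geod (p x y : V) : x != y -> d x y != 1 ->
  d x y = d x (ico_next p x y) + d (ico_next p x y) y.
Proof.
move=> Hxy H1; have /= := all3vP next_geod_tab p x y.
rewrite -val_eqE in Hxy; rewrite Hxy -ico_dist H1 /= !ico_dist ico_next_val.
by move/eqP.
Qed.

Lemma next_coh_tab : all4v (fun p x y z => (dist_n x y == 1) ==> (2 <= dist_n y z) ==>
   (((dist_n x z == dist_n x y + dist_n y z) && (next_n p x z == y)) ==
    ((dist_n x (next_n x y z) == dist_n x y + dist_n y (next_n x y z)) &&
     (next_n p x (next_n x y z) == y)))).
Proof. by vm_compute. Qed.

Lemma ico_next_coh (p x y z : V) : d x y = 1 -> 2 <= d y z ->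
  ((d x z == d x y + d y z) && (ico_next p x z == y)) =
  ((d x (ico_next x y z) == d x y + d y (ico_next x y z)) &&
   (ico_next p x (ico_next x y z) == y)).
Proof.
move=> H1 H2; have /= := all4vP next_coh_tab p x y z.
rewrite !ico_next_eq !ico_dist !ico_next_val in H1 H2 *; rewrite H1 H2 /=.
by move/eqP.
Qed.

Lemma rank_next_tab : all4v (fun p x y t => (dist_n x y == 1) ==> (dist_n y t == 1) ==>
   (dist_n x t == 2) ==> (next_n p x t != y) ==>
   (rank_n p x y < rank_n p x (next_n p x t))).
Proof. by vm_compute. Qed.

Lemma ico_rank_next (p x y t : V) : d x y = 1 -> d y t = 1 -> d x t = 2 ->
  ico_next p x t != y -> ico_rank p x y < ico_rank p x (ico_next p x t).
Proof.
move=> H1 H2 H3 H4; have /= := all4vP rank_next_tab p x y t.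
rewrite !ico_dist in H1 H2 H3; rewrite ico_next_eq in H4.
by rewrite H1 H2 H3 H4 /ico_rank ico_next_val.
Qed.

Lemma ico_rank_lt (p x y : V) : ico_rank p x y < 6.
Proof. by apply: (all3vP (Q := fun p x y => rank_n p x y < 6)); vm_compute. Qed.

End Icosahedron.

Theorem theorem3p4 : diagonal ico_edge.
Proof.
exact: (geodesic_matching_diagonal ico_next_adj ico_next_geod ico_next_coh
          ico_rank_next ico_rank_lt ico_tri).
Qed.
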